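(* Consider the problem $$\min_{L,W}\ \|L\|_*+\lambda_w\|W\|_1\quad\text{s.t.}\quad (1-W)\circ(X-L)=0,\ W\in[0,1]^{mn\times k},$$ with data $X\in\mathbb{R}^{mn\times k}$ and $\lambda_w>0$, and its augmented Lagrangian (with $\rho_x>0$) $$\mathcal{L}(L,W,U_x)=\|L\|_*+\lambda_w\|W\|_1+\iota_{[0,1]}(W)+\langle U_x,(1-W)\circ(L-X)\rangle+\frac{\rho_x}{2}\|(1-W)\circ(L-X)\|^2 .$$ Let $\{(L^i,W^i,U_x^i)\}_{i\ge0}$ be generated, with proximal parameters $\tau_L>0,\tau_W>0$ and initialization $W^0=0$, $U_x^0=0$ and some $L^0$, by the iteration $$L^{i+1}=\arg\min_L \|L\|_*+\frac{\rho_x}{2\tau_L}\big\|L-(L^i-\tau_L\Lambda_L^i)\big\|^2=\mathcal{D}\Big(L^i-\tau_L\Lambda_L^i,\tfrac{\tau_L}{\rho_x}\Big),$$ $$W^{i+1}=\arg\min_W \lambda_w\|W\|_1+\iota_{[0,1]}(W)+\frac{\rho_x}{2\tau_W}\big\|W-(W^i-\tau_W\Lambda_W^i)\big\|^2=\Pi_{[0,1]}\Big[\mathrm{soft}\Big(W^i-\tau_W\Lambda_W^i,\tfrac{\lambda_w\tau_W}{\rho_x}\Big)\Big],$$ $$U_x^{i+1}=U_x^i+\rho_x\big((1-W^{i+1})\circ(L^{i+1}-X)\big),$$ where $\Lambda_L^i=(1-W^i)\circ\big((L^i-X)\circ(1-W^i)+U_x^i/\rho_x\big)$ and $\Lambda_W^i=(X-L^{i+1})\circ\big((L^{i+1}-X)\circ(1-W^i)+U_x^i/\rho_x\big)$.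 Suppose that $\|U_x^{i+1}-U_x^i\|\to0$. Then $\nabla_{U_x}\mathcal{L}(L^i,W^i,U_x^i)\to0$, and every limit point $(L^\infty,W^\infty)$ of the sequence $\{(L^i,W^i)\}_{i\ge0}$ is feasible for the problem above, i.e. $W^\infty\in[0,1]^{mn\times k}$ and $(1-W^\infty)\circ(X-L^\infty)=0$.
   Context: $\|\cdot\|_*$ nuclear norm; $\|\cdot\|_1$ entrywise $\ell_1$ norm; $\|\cdot\|$ Frobenius norm; $\langle\cdot,\cdot\rangle$ the Frobenius inner product; $\circ$ entrywise product; $1$ the all-ones matrix; $\iota_{[0,1]}(W)=0$ if all entries of $W$ lie in $[0,1]$ and $+\infty$ otherwise. $\mathcal{D}(Y,\delta)=U(\Sigma-\delta I)_+V^T$ for an SVD $Y=U\Sigma V^T$ (singular value thresholding, $(a)_+=\max\{0,a\}$). $\mathrm{soft}(Y,t)$ is entrywise soft-thresholding $\mathrm{sign}(Y_{ij})\max\{|Y_{ij}|-t,0\}$, and $\Pi_{[0,1]}$ is entrywise projection onto $[0,1]$. *)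

From HB Require Import structures.
From mathcomp Require Import all_boot all_order all_algebra.
From mathcomp Require Import reals.
Set Implicit Arguments. Unset Strict Implicit. Unset Printing Implicit Defensive.
Import Order.TTheory GRing.Theory Num.Theory.
Local Open Scope ring_scope.

Section Defs.
Variable R : realType.

Definition hadm p q (A B : 'M[R]_(p, q)) : 'M[R]_(p, q) :=
  \matrix_(i, j) (A i j * B i j).

Definition onesm p q : 'M[R]_(p, q) := const_mx 1.

Definition frob_dot p q (A B : 'M[R]_(p, q)) : R := \sum_i \sum_j A i j * B i j.
Definition frob p q (A : 'M[R]_(p, q)) : R := Num.sqrt (frob_dot A A).

Definition pos_part (a : R) : R := Num.max 0 a.

Definition soft p q (Y : 'M[R]_(p, q)) (t : R) : 'M[R]_(p, q) :=
  \matrix_(i, j) (Num.sg (Y i j) * pos_part (`|Y i j| - t)).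

Definition proj01 p q (Y : 'M[R]_(p, q)) : 'M[R]_(p, q) :=
  \matrix_(i, j) Num.min 1 (Num.max 0 (Y i j)).

Definition in01 p q (W : 'M[R]_(p, q)) : Prop :=
  forall i j, 0 <= W i j <= 1.

Definition orthogonal_mx p (Q : 'M[R]_p) : Prop := Q^T *m Q = 1%:M.

Definition is_svd p q (Y : 'M[R]_(p, q)) (U : 'M[R]_p) (S : 'M[R]_(p, q))
    (V : 'M[R]_q) : Prop :=
  [/\ orthogonal_mx U, orthogonal_mx V,
      (forall (i : 'I_p) (j : 'I_q), (i : nat) <> j -> S i j = 0),
      (forall (i : 'I_p) (j : 'I_q), 0 <= S i j) &
      Y = U *m S *m V^T].

Definition shrink_diag p q (S : 'M[R]_(p, q)) (d : R) : 'M[R]_(p, q) :=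
  \matrix_(i, j) pos_part (S i j - (if (i : nat) == j then d else 0)).

(* singular value thresholding: Z = D(Y, d) = U (Sigma - d I)_+ V^T
   for an SVD Y = U Sigma V^T (the result is independent of the SVD chosen) *)
Definition is_svt p q (Y : 'M[R]_(p, q)) (d : R) (Z : 'M[R]_(p, q)) : Prop :=
  exists U S V, is_svd Y U S V /\ Z = U *m shrink_diag S d *m V^T.

(* gradient of the augmented Lagrangian w.r.t. U_x:
   L(L,W,U) is affine in U with linear part <U, (1-W) o (L-X)>,
   so grad_U L(L,W,U) = (1-W) o (L-X). *)
Definition grad_Ux p q (X L W : 'M[R]_(p, q)) : 'M[R]_(p, q) :=
  hadm (onesm p q - W) (L - X).

Definition LambdaL p q (rho : R) (X L W U : 'M[R]_(p, q)) : 'M[R]_(p, q) :=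
  hadm (onesm p q - W) (hadm (L - X) (onesm p q - W) + rho^-1 *: U).
Definition LambdaW p q (rho : R) (X Lnext W U : 'M[R]_(p, q)) : 'M[R]_(p, q) :=
  hadm (X - Lnext) (hadm (Lnext - X) (onesm p q - W) + rho^-1 *: U).

Definition admm_iterates p q (X : 'M[R]_(p, q)) (lamw rho tauL tauW : R)
    (L W U : nat -> 'M[R]_(p, q)) : Prop :=
  [/\ W 0%N = 0, U 0%N = 0 &
  forall i : nat,
    [/\ is_svt (L i - tauL *: LambdaL rho X (L i) (W i) (U i)) (tauL / rho)
               (L i.+1),
        W i.+1 = proj01 (soft (W i - tauW *: LambdaW rho X (L i.+1) (W i) (U i))
                              (lamw * tauW / rho)) &
        U i.+1 = U i + rho *: hadm (onesm p q - W i.+1) (L i.+1 - X)]].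

Definition tends_to_zero p q (A : nat -> 'M[R]_(p, q)) : Prop :=
  forall eps : R, 0 < eps -> exists N : nat, forall i, (N <= i)%N -> frob (A i) < eps.

Definition limit_point p q (L W : nat -> 'M[R]_(p, q)) (Linf Winf : 'M[R]_(p, q))
  : Prop :=
  forall eps : R, 0 < eps -> forall N : nat, exists i, (N <= i)%N /\
    frob (L i - Linf) < eps /\ frob (W i - Winf) < eps.

End Defs.

From HB Require Import structures.
From mathcomp Require Import all_boot all_order all_algebra.
From mathcomp Require Import reals.
From mathcomp Require Import ring lra.
Set Implicit Arguments. Unset Strict Implicit. Unset Printing Implicit Defensive.
Import Order.TTheory GRing.Theory Num.Theory.
Local Open Scope ring_scope.

(* The multiplier update makes [rho^-1 (U_{i+1} - U_i)] exactly the constraint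
   residual [(1 - W_{i+1}) o (L_{i+1} - X)], so the residual vanishes in the
   limit.  The [W]-update ends with a projection, so every [W_i] lies in the
   closed box [[0,1]], and so do its limit points.  Finally the residual is
   jointly continuous in [(L, W)]: along a subsequence approaching
   [(Linf, Winf)] it tends both to [0] and to [(1 - Winf) o (Linf - X)]. *)

Section MatrixSequences.
Variables (R : realType) (p q : nat).

Lemma entry_le_frob (A : 'M[R]_(p, q)) a b : `|A a b| <= frob A.
Proof.
rewrite /frob /frob_dot -sqrtr_sqr ler_wsqrtr // (bigD1 a) //= (bigD1 b) //=.
rewrite -expr2 -addrA lerDl addr_ge0 ?sumr_ge0 // => [j _ | i _].
  by rewrite -expr2 sqr_ge0.
by rewrite sumr_ge0 // => j _; rewrite -expr2 sqr_ge0.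
Qed.

Lemma frobZ (c : R) (A : 'M[R]_(p, q)) : frob (c *: A) = `|c| * frob A.
Proof.
rewrite /frob /frob_dot -sqrtr_sqr -sqrtrM ?sqr_ge0 // mulr_sumr.
congr Num.sqrt; apply: eq_bigr => i _; rewrite mulr_sumr.
by apply: eq_bigr => j _; rewrite !mxE; ring.
Qed.

Lemma tends_to_zeroZ (c : R) (A : nat -> 'M[R]_(p, q)) :
  tends_to_zero A -> tends_to_zero (fun i => c *: A i).
Proof.
move=> A0 e e_gt0; have c1_gt0 : 0 < `|c| + 1 by rewrite ltr_pwDr.
have [N AN] := A0 _ (divr_gt0 e_gt0 c1_gt0).
exists N => i /AN Ai; rewrite frobZ.
apply: (le_lt_trans (ler_wpM2l (normr_ge0 c) (ltW Ai))).
by rewrite mulrA ltr_pdivrMr // mulrDr mulr1 mulrC ltrDl.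
Qed.

Lemma tends_to_zeroS (A B : nat -> 'M[R]_(p, q)) :
  (forall i, A i.+1 = B i) -> tends_to_zero B -> tends_to_zero A.
Proof.
move=> AB B0 e /B0[N BN]; exists N.+1 => -[|i] // Ni.
by rewrite AB; apply: BN.
Qed.

Lemma in01_proj01 (Y : 'M[R]_(p, q)) : in01 (proj01 Y).
Proof. by move=> i j; rewrite mxE le_min ler01 le_max lexx ge_min lexx. Qed.

Lemma limit_point_entry (L W : nat -> 'M[R]_(p, q)) Linf Winf a b e N :
  limit_point L W Linf Winf -> 0 < e ->
  exists i, [/\ (N <= i)%N, `|L i a b - Linf a b| < e & `|W i a b - Winf a b| < e].
Proof.
move=> LW e_gt0; have [i [Ni [Li Wi]]] := LW e e_gt0 N.
exists i; split=> //.
  by have := le_lt_trans (entry_le_frob _ a b) Li; rewrite !mxE.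
by have := le_lt_trans (entry_le_frob _ a b) Wi; rewrite !mxE.
Qed.

Lemma in01_limit_point (L W : nat -> 'M[R]_(p, q)) Linf Winf :
  (forall i, in01 (W i)) -> limit_point L W Linf Winf -> in01 Winf.
Proof.
move=> W01 LW a b; apply/andP; split; apply/ler_addgt0Pr => e e_gt0;
  have [i [_ _ Wi]] := limit_point_entry a b 0 LW e_gt0;
  have /andP[Wi_ge0 Wi_le1] := W01 i a b;
  move: Wi; rewrite ltr_distl => /andP[]; lra.
Qed.

Lemma residual_gap_le (w w' l l' x : R) : 0 <= w <= 1 ->
  `|(1 - w') * (x - l')| <= `|(1 - w) * (l - x)| + `|l - l'| + `|w - w'| * `|l' - x|.
Proof.
move=> /andP[w_ge0 w_le1].
have -> : (1 - w') * (x - l') =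
    - ((1 - w) * (l - x) - (1 - w) * (l - l') + (w - w') * (l' - x)) by ring.
rewrite normrN -normrM; apply: (le_trans (ler_normD _ _)); rewrite lerD2r.
apply: (le_trans (ler_normB _ _)); rewrite lerD2l normrM ler_piMl //.
by rewrite ler_norml; lra.
Qed.

Lemma residual_limit_point (X : 'M[R]_(p, q)) (L W : nat -> 'M[R]_(p, q))
    Linf Winf :
  (forall i, in01 (W i)) -> tends_to_zero (fun i => grad_Ux X (L i) (W i)) ->
  limit_point L W Linf Winf -> hadm (@onesm R p q - Winf) (X - Linf) = 0.
Proof.
move=> W01 grad0 LW; apply/matrixP => a b; rewrite !mxE.
apply/eqP; rewrite -normr_le0; apply/ler_addgt0Pr => e e_gt0; rewrite add0r.
set K := 2 + `|Linf a b - X a b|.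
have K_gt0 : 0 < K by rewrite ltr_pwDl.
have d_gt0 : 0 < e / K by rewrite divr_gt0.
have [N gradN] := grad0 _ d_gt0.
have [i [Ni Li Wi]] := limit_point_entry a b N LW d_gt0.
have gradi := le_lt_trans (entry_le_frob _ a b) (gradN i Ni); rewrite !mxE in gradi.
apply: (le_trans (residual_gap_le _ (L i a b) _ _ (W01 i a b))).
have -> : e = e / K + e / K + e / K * `|Linf a b - X a b|.
  by rewrite /K; field; rewrite gt_eqF.
apply: lerD (lerD (ltW gradi) (ltW Li)) _.
by rewrite ler_wpM2r // ltW.
Qed.

End MatrixSequences.

Section Iterates.
Variables (R : realType) (p q : nat) (X : 'M[R]_(p, q)).
Variables (lamw rho tauL tauW : R) (L W U : nat -> 'M[R]_(p, q)).
Hypothesis iterates : admm_iterates X lamw rho tauL tauW L W U.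

Lemma admm_W_in01 i : in01 (W i).
Proof.
have [W0 _ step] := iterates; case: i => [|i].
  by move=> a b; rewrite W0 mxE lexx ler01.
by have [_ -> _] := step i; apply: in01_proj01.
Qed.

Lemma admm_grad_Ux i : rho != 0 ->
  grad_Ux X (L i.+1) (W i.+1) = rho^-1 *: (U i.+1 - U i).
Proof.
have [_ _ step] := iterates; have [_ _ ->] := step i => rho_neq0.
by rewrite addrC addKr scalerA mulVf // scale1r.
Qed.

End Iterates.

Theorem proposition3 (R : realType) (m n k : nat) (X : 'M[R]_(m * n, k))
    (lamw rho tauL tauW : R) (L W U : nat -> 'M[R]_(m * n, k)) :
  0 < lamw -> 0 < rho -> 0 < tauL -> 0 < tauW ->
  admm_iterates X lamw rho tauL tauW L W U ->
  tends_to_zero (fun i => U i.+1 - U i) ->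
  tends_to_zero (fun i => grad_Ux X (L i) (W i)) /\
  (forall Linf Winf, limit_point L W Linf Winf ->
     in01 Winf /\ hadm (@onesm R (m * n) k - Winf) (X - Linf) = 0).
Proof.
move=> _ rho_gt0 _ _ iterates dU0.
have W01 := admm_W_in01 iterates.
have grad0 : tends_to_zero (fun i => grad_Ux X (L i) (W i)).
  apply: tends_to_zeroS (tends_to_zeroZ rho^-1 dU0) => i.
  by rewrite (admm_grad_Ux iterates) ?gt_eqF.
split=> // Linf Winf LW; split.
  exact: in01_limit_point LW.
exact: residual_limit_point LW.
Qed.
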